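(* Let $G$, $P$, $w$ be as in the context, and assume all edge costs $w_{ij}$ are positive integer multiples of a number $\delta>0$. Let $s\neq t$ with at least one directed path from $s$ to $t$. For $\alpha\in(0,1)$ write $U_s^{\{t,\overline{o}\}}(\alpha)=L_{st}+\epsilon_{st}(\alpha)$. Then $\epsilon_{st}(\alpha)=\delta\sum_{j\ge1}\alpha^{j\delta}\gamma_j$ with all $\gamma_j\ge 0$, where, letting $l_1=L_{st}<l_2<\dots$ with $l_{i+1}=l_i+\delta$ enumerate the possible walk costs from $s$ to $t$ and $\mathrm{Pr}_{l_i}$ be the probability (under $P$, with $t$ absorbing) that the walk from $s$ reaches $t$ with total cost exactly $l_i$, $\gamma_j=\dfrac{\sum_{i\ge1}\alpha^{l_i}\mathrm{Pr}_{l_{i+j}}}{\sum_{i\ge1}\alpha^{l_i}\mathrm{Pr}_{l_i}}$. In particular $U_s^{\{t,\overline{o}\}}(\alpha)\ge L_{st}$ for all $\alpha\in(0,1)$.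
   Context: $G=(V,E)$ is a finite directed graph; each edge $e_{ij}\in E$ has a positive cost $w_{ij}$. $P$ is a row-stochastic transition matrix with $P_{ij}>0$ iff $e_{ij}\in E$. $L_{st}$ is the minimum total cost of a directed path from $s$ to $t$. Evaporating network $G_\alpha$: Markov chain on $V\cup\{o\}$ with $P_{ij}(\alpha)=P_{ij}\alpha^{w_{ij}}$ ($i,j\in V$), $P_{io}(\alpha)=1-\sum_jP_{ij}\alpha^{w_{ij}}$, $o$ absorbing. With $t$ and $o$ absorbing and $\mathcal T=V\setminus\{t\}$, let $Q_x$ be the probability that the chain from $x$ is absorbed at $t$, $F(\alpha)=(I-P(\alpha)_{\mathcal T\mathcal T})^{-1}$, $F^{\{t,\overline o\}}_{sm}(\alpha)=F_{sm}(\alpha)Q_m/Q_s$, and avoidance hitting cost $U_s^{\{t,\overline{o}\}}(\alpha)=\sum_{m\in\mathcal T}F^{\{t,\overline o\}}_{sm}(\alpha)\,r_m$, $r_m=\sum_{i}P_{mi}(\alpha)w_{mi}Q_i/Q_m$; it equals the expected total cost of the walk from $s$ conditioned on absorption at $t$. *)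

From Stdlib Require Import Reals Lra Lia Arith List ClassicalEpsilon.
Open Scope R_scope.

(* Vertices are the naturals 0 .. n-1; matrices are functions nat -> nat -> R. *)

Fixpoint rsum (n : nat) (f : nat -> R) : R :=
  match n with O => 0 | S k => rsum k f + f k end.

(* sum over the transient set T = V \ {t} *)
Definition rsumT (n t : nat) (f : nat -> R) : R :=
  rsum n (fun m => if Nat.eqb m t then 0 else f m).

(* Value of a series (classically chosen limit; 0 if divergent). *)
Definition ssum (u : nat -> R) : R :=
  match excluded_middle_informative (exists l, infinite_sum u l) with
  | left H => proj1_sig (constructive_indefinite_description _ H)
  | right _ => 0
  end.

(* Directed walk x = x0 -> x1 -> ... -> xk = y, p = [x1; ...; xk],
   each step an edge of G, i.e. P x_i x_{i+1} > 0. *)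
Fixpoint walk_ok (n : nat) (P : nat -> nat -> R) (x : nat) (p : list nat) (y : nat) : Prop :=
  match p with
  | nil => x = y
  | z :: p' => (z < n)%nat /\ 0 < P x z /\ walk_ok n P z p' y
  end.

Fixpoint walk_cost (w : nat -> nat -> R) (x : nat) (p : list nat) : R :=
  match p with
  | nil => 0
  | z :: p' => w x z + walk_cost w z p'
  end.

Definition is_min_cost (n : nat) (P w : nat -> nat -> R) (s t : nat) (L : R) : Prop :=
  (exists p, walk_ok n P s p t /\ walk_cost w s p = L) /\
  (forall p, walk_ok n P s p t -> L <= walk_cost w s p).

Definition Pev (P w : nat -> nat -> R) (alpha : R) (i j : nat) : R :=
  P i j * Rpower alpha (w i j).

(* F = (I - P(alpha)_TT)^{-1}: F is the inverse on the index set T. *)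
Definition is_fundamental (n t : nat) (Pa : nat -> nat -> R) (F : nat -> nat -> R) : Prop :=
  forall i k, (i < n)%nat -> (k < n)%nat -> i <> t -> k <> t ->
    rsumT n t (fun m => ((if Nat.eqb i m then 1 else 0) - Pa i m) * F m k)
      = (if Nat.eqb i k then 1 else 0).

(* Absorption probability at t (t and o absorbing): Q_x = sum_{m in T} F_xm P_mt(alpha), Q_t = 1. *)
Definition Qabs (n t : nat) (Pa F : nat -> nat -> R) (x : nat) : R :=
  if Nat.eqb x t then 1 else rsumT n t (fun m => F x m * Pa m t).

(* r_m = sum_i P_mi(alpha) w_mi Q_i / Q_m  (the sink o contributes Q_o = 0). *)
Definition rcost (n t : nat) (Pa w F : nat -> nat -> R) (m : nat) : R :=
  rsum n (fun i => Pa m i * w m i * Qabs n t Pa F i / Qabs n t Pa F m).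

Definition Uavoid (n t : nat) (Pa w F : nat -> nat -> R) (s : nat) : R :=
  rsumT n t (fun m => F s m * Qabs n t Pa F m / Qabs n t Pa F s * rcost n t Pa w F m).

(* hitw m c x: probability (under P, t absorbing) that the walk from x
   reaches t for the first time after exactly m steps with total cost exactly c. *)
Fixpoint hitw (n : nat) (P w : nat -> nat -> R) (t : nat) (m : nat) (c : R) (x : nat) : R :=
  match m with
  | O => if Nat.eqb x t then (if Req_EM_T c 0 then 1 else 0) else 0
  | S m' => if Nat.eqb x t then 0
            else rsum n (fun j => P x j * hitw n P w t m' (c - w x j) j)
  end.

Definition PrCost (n : nat) (P w : nat -> nat -> R) (s t : nat) (l : R) : R :=
  ssum (fun m => hitw n P w t m l s).

From Stdlib Require Import Reals List Lra Lia ClassicalEpsilon.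
From Coquelicot Require Import Coquelicot.
Open Scope R_scope.

(* Put beta = alpha^delta and let pi_k(x) be the probability that the walk from x reaches t with
   cost exactly k*delta.  The discounted sums phi(x) = sum_k beta^k pi_k(x) and
   psi(x) = sum_k k*delta*beta^k pi_k(x) satisfy first-step recursions over T whose coefficient
   matrix is P(alpha); its rows sum to at most beta < 1, so these systems are uniquely solvable,
   which identifies Q with phi and psi(s) with sum_m F_sm phi(m) r_m, i.e. U = psi(s) / phi(s).
   Writing L = k0*delta and a_m = beta^(k0+m) pi_(k0+m)(s), this is
   U - L = delta * (sum_m m a_m) / (sum_m a_m), and sum_m m a_m = sum_k (sum_(i>k) a_i); each
   tail sum_(i>k) a_i equals beta^(k+1) times the numerator of gamma_(k+1). *)

Lemma rsum_ext n f g : (forall j, (j < n)%nat -> f j = g j) -> rsum n f = rsum n g.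
Proof.
induction n as [|n IH]; simpl; intros H; auto.
rewrite IH, H; auto; intros; apply H; lia.
Qed.

Lemma rsum0 n : rsum n (fun _ => 0) = 0.
Proof. induction n; simpl; lra. Qed.

Lemma rsumD n f g : rsum n (fun j => f j + g j) = rsum n f + rsum n g.
Proof. induction n; simpl; lra. Qed.

Lemma rsumZ n c f : rsum n (fun j => c * f j) = c * rsum n f.
Proof. induction n; simpl; [|rewrite IHn]; lra. Qed.

Lemma rsumZr n c f : rsum n (fun j => f j * c) = rsum n f * c.
Proof. induction n; simpl; [|rewrite IHn]; lra. Qed.

Lemma rsum_le n f g : (forall j, (j < n)%nat -> f j <= g j) -> rsum n f <= rsum n g.
Proof.
induction n as [|n IH]; simpl; intros H; [lra|].
assert (f n <= g n) by (apply H; lia).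
assert (rsum n f <= rsum n g) by (apply IH; intros; apply H; lia).
lra.
Qed.

Lemma rsum_ge0 n f : (forall j, (j < n)%nat -> 0 <= f j) -> 0 <= rsum n f.
Proof. intros H. rewrite <- (rsum0 n). apply rsum_le; auto. Qed.

Lemma rsum_ge_term n f j :
  (forall i, (i < n)%nat -> 0 <= f i) -> (j < n)%nat -> f j <= rsum n f.
Proof.
induction n as [|n IH]; simpl; intros H Hj; [lia|].
destruct (Nat.eq_dec j n) as [->|Hne].
- assert (0 <= rsum n f) by (apply rsum_ge0; intros; apply H; lia). lra.
- assert (f j <= rsum n f) by (apply IH; [intros; apply H|]; lia).
  assert (0 <= f n) by (apply H; lia). lra.
Qed.

Lemma rsum_neq0 n f : rsum n f <> 0 -> exists j, (j < n)%nat /\ f j <> 0.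
Proof.
induction n as [|n IH]; simpl; intros H; [lra|].
destruct (Req_dec (f n) 0) as [E|E].
- destruct IH as [j [Hj Hf]]; [lra|]. exists j; split; [lia|auto].
- exists n; split; [lia|auto].
Qed.

Lemma rsum_exchange n m (f : nat -> nat -> R) :
  rsum n (fun i => rsum m (f i)) = rsum m (fun j => rsum n (fun i => f i j)).
Proof. induction n; simpl; [rewrite rsum0|rewrite IHn, <- rsumD]; auto. Qed.

Lemma rsumS n f : rsum (S n) f = f 0%nat + rsum n (fun m => f (S m)).
Proof. revert f; induction n; intros f; simpl in *; [|rewrite IHn]; lra. Qed.

Lemma rsum_abs n f : Rabs (rsum n f) <= rsum n (fun j => Rabs (f j)).
Proof.
induction n; simpl; [rewrite Rabs_R0; lra|].
eapply Rle_trans; [apply Rabs_triang|lra].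
Qed.

Lemma rsum_splitT n t f : (t < n)%nat -> rsum n f = rsumT n t f + f t.
Proof.
unfold rsumT. induction n as [|n IH]; simpl; intros H; [lia|].
destruct (Nat.eq_dec t n) as [->|Hne].
- rewrite Nat.eqb_refl, (rsum_ext n (fun m => if Nat.eqb m n then 0 else f m) f); [lra|].
  intros j Hj. destruct (Nat.eqb_spec j n); [lia|auto].
- rewrite IH by lia. destruct (Nat.eqb_spec n t); [lia|lra].
Qed.

Lemma rsumT_ext n t f g :
  (forall j, (j < n)%nat -> j <> t -> f j = g j) -> rsumT n t f = rsumT n t g.
Proof. intros H. apply rsum_ext; intros j Hj. destruct (Nat.eqb_spec j t); auto. Qed.

Lemma rsumTB n t f g : rsumT n t (fun j => f j - g j) = rsumT n t f - rsumT n t g.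
Proof. unfold rsumT. induction n; simpl; [|rewrite IHn; destruct (Nat.eqb n t)]; lra. Qed.

Lemma rsumTZr n t c f : rsumT n t (fun j => f j * c) = rsumT n t f * c.
Proof.
unfold rsumT. rewrite <- rsumZr. apply rsum_ext; intros. destruct (Nat.eqb j t); ring.
Qed.

Lemma rsumT_kronecker n t x v : (x < n)%nat -> x <> t ->
  rsumT n t (fun m => (if Nat.eqb x m then 1 else 0) * v m) = v x.
Proof.
unfold rsumT. induction n as [|n IH]; simpl; intros Hx Hxt; [lia|].
destruct (Nat.eq_dec x n) as [->|Hne].
- rewrite Nat.eqb_refl. destruct (Nat.eqb_spec n t); [contradiction|].
  rewrite (rsum_ext n _ (fun _ => 0)), rsum0; [lra|].
  intros j Hj. destruct (Nat.eqb_spec n j); [lia|]. destruct (Nat.eqb j t); lra.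
- rewrite IH by lia. destruct (Nat.eqb_spec x n); [lia|]. destruct (Nat.eqb n t); lra.
Qed.

Lemma rsumT_exchange n t (f : nat -> nat -> R) :
  rsumT n t (fun i => rsumT n t (f i)) = rsumT n t (fun j => rsumT n t (fun i => f i j)).
Proof.
unfold rsumT.
transitivity (rsum n (fun i => rsum n (fun j =>
  if Nat.eqb i t then 0 else if Nat.eqb j t then 0 else f i j))).
- apply rsum_ext; intros i _. destruct (Nat.eqb i t); [rewrite rsum0|]; auto.
- rewrite rsum_exchange. apply rsum_ext; intros j _. destruct (Nat.eqb j t).
  + rewrite (rsum_ext n _ (fun _ => 0)), rsum0; auto. intros i _. destruct (Nat.eqb i t); auto.
  + apply rsum_ext; auto.
Qed.

Fixpoint rmax (n : nat) (f : nat -> R) : R :=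
  match n with O => 0 | S k => Rmax (rmax k f) (f k) end.

Lemma rmax_ge n f j : (j < n)%nat -> f j <= rmax n f.
Proof.
induction n; simpl; intros; [lia|]. destruct (Nat.eq_dec j n) as [->|].
- apply Rmax_r.
- eapply Rle_trans; [apply IHn; lia|apply Rmax_l].
Qed.

Lemma rmax_ge0 n f : 0 <= rmax n f.
Proof. induction n; simpl; [lra|]. eapply Rle_trans; [apply IHn|apply Rmax_l]. Qed.

Lemma rmax_lub n f B : (forall j, (j < n)%nat -> f j <= B) -> 0 <= B -> rmax n f <= B.
Proof. induction n; simpl; intros H HB; [lra|]. apply Rmax_lub; [apply IHn|apply H]; auto. Qed.

Lemma sum_n_rsum (f : nat -> R) N : sum_n f N = rsum (S N) f.
Proof. rewrite sum_n_Reals. induction N; simpl in *; [|rewrite IHN]; lra. Qed.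

(* [is_series_ext] at type [R], so that the pointwise equations are goals over [R] that [ring]
   and [field] recognise. *)
Lemma is_series_ext_R (a b : nat -> R) l : (forall k, a k = b k) ->
  is_series a l -> is_series b l.
Proof. apply is_series_ext. Qed.

Lemma is_series_0 : is_series (fun _ : nat => 0) 0.
Proof.
apply (is_lim_seq_ext (fun _ => 0) (sum_n (fun _ => 0)) 0); [|apply is_lim_seq_const].
intros N. rewrite sum_n_rsum, rsum0. auto.
Qed.

Lemma is_series_rsum n (f : nat -> nat -> R) l :
  (forall j, (j < n)%nat -> is_series (f j) (l j)) ->
  is_series (fun k => rsum n (fun j => f j k)) (rsum n l).
Proof.
induction n as [|n IH]; simpl; intros H; [apply is_series_0|].
apply (is_series_plus (V := R_NormedModule)); [apply IH; intros; apply H|apply H]; lia.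
Qed.

Lemma is_series_tail K a l : is_series a l ->
  is_series (fun k => a (K + k)%nat) (l - rsum K a).
Proof.
revert a l; induction K as [|K IH]; intros a l H; simpl; [rewrite Rminus_0_r; auto|].
assert (H1 : is_series (fun k => a (S k)) (l - a 0%nat)).
{ apply is_series_incr_1. change (plus ?x ?y) with (x + y). now rewrite Rplus_comm, Rplus_minus. }
replace (l - (rsum K a + a K)) with (l - a 0%nat - rsum K (fun k => a (S k))).
- exact (IH _ _ H1).
- pose proof (rsumS K a) as E. simpl in E. lra.
Qed.

Lemma is_series_untail K a l : is_series (fun k => a (K + k)%nat) l ->
  is_series a (l + rsum K a).
Proof.
intros H. assert (E : ex_series a) by (apply (ex_series_incr_n a K); eexists; eauto).
destruct E as [l' Hl'].
rewrite <- (is_series_unique _ _ H), (is_series_unique _ _ (is_series_tail K a l' Hl')).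
now rewrite Rplus_comm, Rplus_minus.
Qed.

Lemma is_series_le a b la lb : (forall k, a k <= b k) ->
  is_series a la -> is_series b lb -> la <= lb.
Proof.
intros Hle Ha Hb. apply (is_lim_seq_le (sum_n a) (sum_n b) la lb); auto.
intros N. rewrite !sum_n_Reals. apply sum_growing. auto.
Qed.

Lemma is_series_le_bound a l B : is_series a l -> (forall M, rsum M a <= B) -> l <= B.
Proof.
intros H Hb. apply (is_lim_seq_le (sum_n a) (fun _ => B) l B); auto.
- intros N. rewrite sum_n_rsum. auto.
- apply is_lim_seq_const.
Qed.

Lemma is_series_ge0 a l : (forall k, 0 <= a k) -> is_series a l -> 0 <= l.
Proof. intros Hp H. exact (is_series_le _ _ _ _ Hp is_series_0 H). Qed.

Lemma is_series_ge_term a l k : (forall k, 0 <= a k) -> is_series a l -> a k <= l.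
Proof.
intros Hp H.
assert (0 <= l - rsum (S k) a) by exact (is_series_ge0 _ _ (fun i => Hp _) (is_series_tail _ _ _ H)).
assert (a k <= rsum (S k) a) by (apply rsum_ge_term; auto).
lra.
Qed.

Lemma ex_series_bounded a B : (forall k, 0 <= a k) -> (forall M, rsum M a <= B) -> ex_series a.
Proof.
intros Hp Hb. apply ex_series_Reals_1.
destruct (growing_cv (sum_f_R0 a)) as [l Hl].
- intro m; simpl; specialize (Hp (S m)); lra.
- exists B. intros x [N ->]. rewrite <- sum_n_Reals, sum_n_rsum; auto.
- exists l; auto.
Qed.

Lemma ssum_eq u l : is_series u l -> ssum u = l.
Proof.
intros H. apply is_series_Reals in H. unfold ssum.
destruct excluded_middle_informative as [E|E].
- destruct (constructive_indefinite_description _ E) as [l' Hl']; simpl.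
  eapply uniqueness_sum; eauto.
- exfalso; apply E; eauto.
Qed.

Lemma ex_series_INR_pow q : 0 <= q < 1 -> ex_series (fun k => INR k * q ^ k).
Proof.
intros Hq.
assert (Hrad : CV_radius (fun _ => 1) = 1).
{ rewrite (CV_radius_finite_DAlembert _ 1); [now rewrite Rinv_1|intros; lra|lra|].
  apply (is_lim_seq_ext (fun _ => 1)); [|apply is_lim_seq_const].
  intros; rewrite Rdiv_1_r, Rabs_R1; auto. }
assert (Hder : ex_pseries (PS_derive (fun _ => 1)) q).
{ apply ex_pseries_derive. rewrite Hrad, Rabs_pos_eq; simpl; lra. }
apply (ex_series_le (V := R_CompleteNormedModule)
  (fun k => INR k * q ^ k) (fun k => scal (pow_n q k) (PS_derive (fun _ => 1) k))); auto.
intros k. unfold PS_derive. change (scal ?x ?y) with (x * y).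
change (norm ?x) with (Rabs x). rewrite S_INR, (pow_n_pow q k : pow_n q k = q ^ k).
assert (0 <= INR k) by apply pos_INR. assert (0 <= q ^ k) by (apply pow_le; lra).
rewrite Rabs_pos_eq; nra.
Qed.

Lemma is_series_uniq (a : nat -> R) l l' : is_series a l -> is_series a l' -> l = l'.
Proof. intros H H'. now rewrite <- (is_series_unique _ _ H), <- (is_series_unique _ _ H'). Qed.

Lemma is_series_drop_zeros K a l : (forall k, (k < K)%nat -> a k = 0) ->
  is_series a l -> is_series (fun i => a (K + i)%nat) l.
Proof.
intros H0 H. pose proof (is_series_tail K a l H) as Htail.
rewrite (rsum_ext K a (fun _ => 0)), rsum0, Rminus_0_r in Htail by auto. exact Htail.
Qed.

Lemma rsum_tails (a : nat -> R) D K :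
  rsum K (fun k => D - rsum (S k) a) =
  rsum (S K) (fun m => INR m * a m) + INR K * (D - rsum (S K) a).
Proof.
induction K as [|K IH]; [simpl; ring|].
change (rsum (S K) (fun k => D - rsum (S k) a))
  with (rsum K (fun k => D - rsum (S k) a) + (D - rsum (S K) a)).
rewrite IH.
change (rsum (S (S K)) (fun m => INR m * a m))
  with (rsum (S K) (fun m => INR m * a m) + INR (S K) * a (S K)).
change (rsum (S (S K)) a) with (rsum (S K) a + a (S K)). rewrite S_INR. ring.
Qed.

Lemma is_series_tails a D A : (forall m, 0 <= a m) -> is_series a D ->
  is_series (fun m => INR m * a m) A -> is_series (fun k => D - rsum (S k) a) A.
Proof.
intros Hp HD HA.
assert (Hrem : forall K,
  0 <= INR K * (D - rsum (S K) a) <= A - rsum (S K) (fun m => INR m * a m)).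
{ intros K. pose proof (is_series_tail (S K) a D HD) as Htail. split.
  - apply Rmult_le_pos; [apply pos_INR|]. exact (is_series_ge0 _ _ (fun i => Hp _) Htail).
  - apply (is_series_le (fun i => INR K * a (S K + i)%nat) (fun i => INR (S K + i) * a (S K + i)%nat)).
    + intros i. apply Rmult_le_compat_r; [auto|apply le_INR; lia].
    + apply (is_series_scal (V := R_NormedModule)). exact Htail.
    + exact (is_series_tail (S K) (fun m => INR m * a m) A HA). }
change (is_lim_seq (sum_n (fun k => D - rsum (S k) a)) A).
apply (is_lim_seq_le_le (fun N => sum_n (fun m => INR m * a m) (S N)) _ (fun _ => A)).
- intros N. rewrite !sum_n_rsum, rsum_tails. specialize (Hrem (S N)). lra.
- apply (is_lim_seq_incr_1 (sum_n (fun m => INR m * a m))). exact HA.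
- apply is_lim_seq_const.
Qed.

Lemma tail_ratio_series (a : nat -> R) b delta D A :
  0 < b -> 0 < D -> (forall m, 0 <= a m) ->
  is_series a D -> is_series (fun m => INR m * a m) A ->
  let N := fun j => / b ^ j * (D - rsum j a) in
  (forall j, is_series (fun i => / b ^ j * a (j + i)%nat) (N j)) /\
  (forall j, 0 <= N j / D) /\
  is_series (fun k => delta * b ^ S k * (N (S k) / D)) (delta / D * A).
Proof.
intros Hb HD Hp Ha HA N.
assert (Hbj : forall j, 0 < b ^ j) by (intros; apply pow_lt; auto).
split; [|split].
- intros j. apply (is_series_scal (V := R_NormedModule)), is_series_tail; auto.
- intros j. unfold N, Rdiv. pose proof (is_series_ge0 _ _ (fun i => Hp _) (is_series_tail j a D Ha)).
  pose proof (Rinv_0_lt_compat _ (Hbj j)). pose proof (Rinv_0_lt_compat _ HD).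
  apply Rmult_le_pos; [apply Rmult_le_pos|]; [lra|exact H|lra].
- apply (is_series_ext_R (fun k => delta / D * (D - rsum (S k) a))).
  + intros k. unfold N. field. split; [apply pow_nonzero|]; lra.
  + apply (is_series_scal (V := R_NormedModule)), is_series_tails; auto.
Qed.

Section HittingCosts.

Variables (n : nat) (P w : nat -> nat -> R) (delta : R) (t : nat).
Hypothesis HPnn : forall i j, (i < n)%nat -> (j < n)%nat -> 0 <= P i j.
Hypothesis HProw : forall i, (i < n)%nat -> rsum n (P i) = 1.
Hypothesis Hdelta : 0 < delta.
Hypothesis Hw : forall i j, (i < n)%nat -> (j < n)%nat -> 0 < P i j ->
  exists k : nat, (1 <= k)%nat /\ w i j = INR k * delta.

Notation hit := (hitw n P w t).
Notation Pr x c := (PrCost n P w x t c).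

Lemma P_neq0_pos i j : (i < n)%nat -> (j < n)%nat -> P i j <> 0 -> 0 < P i j.
Proof. intros Hi Hj. pose proof (HPnn i j Hi Hj). lra. Qed.

Lemma hitw_ge0 m c x : (x < n)%nat -> 0 <= hit m c x.
Proof.
revert c x; induction m; intros c x Hx; simpl.
- destruct (Nat.eqb x t); [destruct (Req_EM_T c 0)|]; lra.
- destruct (Nat.eqb x t); [lra|]. apply rsum_ge0; intros j Hj.
  apply Rmult_le_pos; auto.
Qed.

Lemma hitw_partial_le1 M c x : (x < n)%nat -> rsum M (fun m => hit m c x) <= 1.
Proof.
revert c x; induction M as [|M IH]; intros c x Hx; [simpl; lra|].
rewrite rsumS. simpl. destruct (Nat.eqb_spec x t).
- rewrite rsum0. destruct (Req_EM_T c 0); lra.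
- rewrite <- rsum_exchange, <- (HProw x Hx), Rplus_0_l.
  apply rsum_le; intros j Hj. rewrite rsumZ.
  pose proof (IH (c - w x j) j Hj). pose proof (HPnn x j Hx Hj). nra.
Qed.

Lemma hitw_neg_cost m c x : c < 0 -> (x < n)%nat -> hit m c x = 0.
Proof.
revert c x; induction m as [|m IH]; intros c x Hc Hx; simpl.
- destruct (Nat.eqb x t); [destruct (Req_EM_T c 0)|]; lra.
- destruct (Nat.eqb x t); [lra|]. rewrite <- (rsum0 n). apply rsum_ext; intros j Hj.
  destruct (Req_dec (P x j) 0) as [E|E]; [rewrite E; lra|].
  destruct (Hw x j Hx Hj (P_neq0_pos x j Hx Hj E)) as [k [Hk Hwk]].
  assert (1 <= INR k) by (apply (le_INR 1); auto).
  rewrite IH; [lra| |auto]. rewrite Hwk. nra.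
Qed.

Lemma walk_cost_multiple x p y : (x < n)%nat -> walk_ok n P x p y ->
  exists K, walk_cost w x p = INR K * delta.
Proof.
revert x; induction p as [|z p IH]; intros x Hx Hwk; simpl in *.
- exists 0%nat; simpl; lra.
- destruct Hwk as [Hz [HP Hr]]. destruct (IH z Hz Hr) as [K HK].
  destruct (Hw x z Hx Hz HP) as [k [_ Hk]]. exists (k + K)%nat. rewrite plus_INR; lra.
Qed.

Lemma hitw_walk m c x : (x < n)%nat -> hit m c x <> 0 ->
  exists p, walk_ok n P x p t /\ walk_cost w x p = c.
Proof.
revert c x; induction m as [|m IH]; intros c x Hx H; simpl in H.
- destruct (Nat.eqb_spec x t); [|lra]. destruct (Req_EM_T c 0); [|lra].
  exists nil; simpl; auto.
- destruct (Nat.eqb_spec x t); [lra|]. apply rsum_neq0 in H. destruct H as [j [Hj Hf]].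
  assert (HP : P x j <> 0) by (intro E; rewrite E in Hf; lra).
  assert (Hh : hit m (c - w x j) j <> 0) by (intro E; rewrite E in Hf; lra).
  destruct (IH _ _ Hj Hh) as [p [Hp Hc]]. exists (j :: p); simpl.
  repeat split; auto; [apply P_neq0_pos; auto|lra].
Qed.

Lemma walk_hitw x p : (x < n)%nat -> walk_ok n P x p t ->
  exists m c, c <= walk_cost w x p /\ 0 < hit m c x.
Proof.
assert (Ht0 : 0 < hit 0 0 t).
{ simpl. rewrite Nat.eqb_refl. destruct (Req_EM_T 0 0); lra. }
revert x; induction p as [|z p IH]; intros x Hx Hwk.
- simpl in Hwk; subst. exists 0%nat, 0. simpl; split; [lra|auto].
- destruct (Nat.eqb_spec x t) as [E|E].
  + subst. exists 0%nat, 0. split; [|auto].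
    destruct (walk_cost_multiple t (z :: p) t Hx Hwk) as [K ->].
    apply Rmult_le_pos; [apply pos_INR|lra].
  + destruct Hwk as [Hz [HP Hr]]. destruct (IH z Hz Hr) as [m [c [Hc Hh]]].
    exists (S m), (w x z + c). split; [simpl; lra|].
    simpl. destruct (Nat.eqb_spec x t); [contradiction|].
    apply Rlt_le_trans with (P x z * hit m (w x z + c - w x z) z).
    { replace (w x z + c - w x z) with c by ring. apply Rmult_lt_0_compat; auto. }
    apply (rsum_ge_term n (fun j => P x j * hit m (w x z + c - w x j) j)); auto.
    intros j Hj. apply Rmult_le_pos; [|apply hitw_ge0]; auto.
Qed.

Lemma PrCost_series x c : (x < n)%nat -> is_series (fun m => hit m c x) (Pr x c).
Proof.
intros Hx.
assert (E : ex_series (fun m => hit m c x)).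
{ apply (ex_series_bounded _ 1); intros; [apply hitw_ge0|apply hitw_partial_le1]; auto. }
destruct E as [l Hl]. unfold PrCost. rewrite (ssum_eq _ _ Hl). auto.
Qed.

Lemma hitw_le_PrCost m c x : (x < n)%nat -> hit m c x <= Pr x c.
Proof.
intros Hx. apply (is_series_ge_term (fun m => hit m c x)); [|apply PrCost_series]; auto.
intros; apply hitw_ge0; auto.
Qed.

Lemma PrCost_bounds c x : (x < n)%nat -> 0 <= Pr x c <= 1.
Proof.
intros Hx. pose proof (PrCost_series x c Hx). split.
- apply (is_series_ge0 (fun m => hit m c x)); auto. intros; apply hitw_ge0; auto.
- eapply is_series_le_bound; eauto. intros; apply hitw_partial_le1; auto.
Qed.

Lemma PrCost_step c x : (x < n)%nat -> x <> t ->
  Pr x c = rsum n (fun j => P x j * Pr j (c - w x j)).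
Proof.
intros Hx Hxt. apply (is_series_uniq (fun m => hit m c x)); [apply PrCost_series; auto|].
replace (rsum n _) with (rsum n (fun j => P x j * Pr j (c - w x j)) + rsum 1 (fun m => hit m c x)).
- apply (is_series_untail 1). cbn [Nat.add hitw]. destruct (Nat.eqb_spec x t); [contradiction|].
  apply is_series_rsum. intros j Hj.
  apply (is_series_scal (V := R_NormedModule)), PrCost_series; auto.
- simpl. destruct (Nat.eqb_spec x t); [contradiction|]. ring.
Qed.

Lemma PrCost_target c : (t < n)%nat -> Pr t c = if Req_EM_T c 0 then 1 else 0.
Proof.
intros Ht. apply (is_series_uniq (fun m => hit m c t)); [apply PrCost_series; auto|].
replace (if Req_EM_T c 0 then 1 else 0) with (0 + rsum 1 (fun m => hit m c t))
  by (simpl; rewrite Nat.eqb_refl; ring).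
apply (is_series_untail 1). apply (is_series_ext_R (fun _ => 0)); [|apply is_series_0].
intros m. simpl. now rewrite Nat.eqb_refl.
Qed.

Lemma PrCost_neg_cost c x : c < 0 -> (x < n)%nat -> Pr x c = 0.
Proof.
intros Hc Hx. apply ssum_eq. apply (is_series_ext_R (fun _ => 0)); [|apply is_series_0].
intros m. rewrite hitw_neg_cost; auto.
Qed.

Lemma PrCost_below_min_cost x L c : (x < n)%nat -> is_min_cost n P w x t L ->
  c < L -> Pr x c = 0.
Proof.
intros Hx [_ Hmin] Hc. apply ssum_eq. apply (is_series_ext_R (fun _ => 0)); [|apply is_series_0].
intros m. destruct (Req_dec (hit m c x) 0) as [E|E]; [auto|].
destruct (hitw_walk m c x Hx E) as [p [Hp Hcost]].
specialize (Hmin p Hp). lra.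
Qed.

Lemma PrCost_min_cost_pos x L : (x < n)%nat -> is_min_cost n P w x t L -> 0 < Pr x L.
Proof.
intros Hx [[p0 [Hp0 Hc0]] Hmin].
destruct (walk_hitw x p0 Hx Hp0) as [m [c [Hc Hh]]].
destruct (hitw_walk m c x Hx ltac:(lra)) as [p [Hp Hcost]].
specialize (Hmin p Hp). replace L with c by lra.
eapply Rlt_le_trans; [exact Hh|apply hitw_le_PrCost; auto].
Qed.

End HittingCosts.

Section DiscountedHitting.

Variables (n : nat) (P w : nat -> nat -> R) (delta : R) (t : nat) (alpha : R).
Hypothesis HPnn : forall i j, (i < n)%nat -> (j < n)%nat -> 0 <= P i j.
Hypothesis HProw : forall i, (i < n)%nat -> rsum n (P i) = 1.
Hypothesis Hdelta : 0 < delta.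
Hypothesis Hw : forall i j, (i < n)%nat -> (j < n)%nat -> 0 < P i j ->
  exists k : nat, (1 <= k)%nat /\ w i j = INR k * delta.
Hypothesis Ht : (t < n)%nat.
Hypothesis Halpha : 0 < alpha < 1.

Definition beta := Rpower alpha delta.

Definition PrCostK k x := PrCost n P w x t (INR k * delta).

Definition disc_weight k0 x m := beta ^ (k0 + m) * PrCostK (k0 + m) x.

Definition disc_hit x := Series (fun k => beta ^ k * PrCostK k x).

Definition disc_cost x := Series (fun k => INR k * delta * beta ^ k * PrCostK k x).

Lemma beta_bounds : 0 < beta < 1.
Proof.
unfold beta, Rpower. split; [apply exp_pos|].
rewrite <- exp_0. apply exp_increasing.
assert (ln alpha < 0) by (rewrite <- ln_1; apply ln_increasing; lra). nra.
Qed.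

Lemma Rpower_lattice K : Rpower alpha (INR K * delta) = beta ^ K.
Proof.
unfold beta. rewrite Rmult_comm, <- Rpower_mult, Rpower_pow; auto.
unfold Rpower; apply exp_pos.
Qed.

Lemma PrCostK_bounds k x : (x < n)%nat -> 0 <= PrCostK k x <= 1.
Proof. intros; apply PrCost_bounds; auto. Qed.

Lemma disc_hit_series x : (x < n)%nat -> is_series (fun k => beta ^ k * PrCostK k x) (disc_hit x).
Proof.
intros Hx. apply Series_correct. pose proof beta_bounds.
apply (ex_series_le (V := R_CompleteNormedModule) _ (fun k => beta ^ k)).
- intros k. change (norm ?y) with (Rabs y). pose proof (PrCostK_bounds k x Hx).
  assert (0 < beta ^ k) by (apply pow_lt; lra). rewrite Rabs_pos_eq; nra.
- apply ex_series_geom. rewrite Rabs_pos_eq; lra.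
Qed.

Lemma disc_cost_series x : (x < n)%nat ->
  is_series (fun k => INR k * delta * beta ^ k * PrCostK k x) (disc_cost x).
Proof.
intros Hx. apply Series_correct. pose proof beta_bounds.
apply (ex_series_le (V := R_CompleteNormedModule) _ (fun k => INR k * beta ^ k * delta)).
- intros k. change (norm ?y) with (Rabs y). pose proof (PrCostK_bounds k x Hx).
  assert (0 < beta ^ k) by (apply pow_lt; lra). assert (0 <= INR k) by apply pos_INR.
  assert (0 <= INR k * beta ^ k) by nra.
  rewrite Rabs_pos_eq; [|apply Rmult_le_pos; nra].
  replace (INR k * delta * beta ^ k * PrCostK k x) with (INR k * beta ^ k * delta * PrCostK k x) by ring.
  assert (0 <= INR k * beta ^ k * delta) by nra. nra.
- apply ex_series_scal_r. apply ex_series_INR_pow. lra.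
Qed.

Lemma disc_weight_ge0 k0 x m : (x < n)%nat -> 0 <= disc_weight k0 x m.
Proof.
intros Hx. pose proof (PrCostK_bounds (k0 + m) x Hx). pose proof beta_bounds.
assert (0 < beta ^ (k0 + m)) by (apply pow_lt; lra). unfold disc_weight. nra.
Qed.

Lemma disc_weight_term k0 x i j :
  Rpower alpha (INR k0 * delta + INR i * delta) *
    PrCost n P w x t (INR k0 * delta + INR (i + j) * delta) = / beta ^ j * disc_weight k0 x (j + i).
Proof.
unfold disc_weight, PrCostK.
replace (INR k0 * delta + INR i * delta) with (INR (k0 + i) * delta) by (rewrite plus_INR; ring).
replace (INR k0 * delta + INR (i + j) * delta) with (INR (k0 + (j + i)) * delta)
  by (rewrite !plus_INR; ring).
rewrite Rpower_lattice, (Nat.add_comm j i), Nat.add_assoc, (pow_add beta (k0 + i) j).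
field. apply pow_nonzero. pose proof beta_bounds. lra.
Qed.

Lemma disc_hit_ge0 x : (x < n)%nat -> 0 <= disc_hit x.
Proof.
intros Hx. apply (is_series_ge0 (fun k => beta ^ k * PrCostK k x)); [|apply disc_hit_series; auto].
intros k. pose proof (PrCostK_bounds k x Hx). pose proof beta_bounds.
assert (0 < beta ^ k) by (apply pow_lt; lra). nra.
Qed.

Lemma PrCostK_target k : PrCostK k t = if Nat.eqb k 0 then 1 else 0.
Proof.
unfold PrCostK. rewrite PrCost_target by auto. destruct (Req_EM_T (INR k * delta) 0) as [E|E].
- apply Rmult_integral in E. destruct E as [E|E]; [|lra].
  destruct k; [auto|]. pose proof (lt_0_INR (S k) ltac:(lia)). lra.
- destruct k; [simpl in E; lra|auto].
Qed.

Lemma disc_hit_target : disc_hit t = 1.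
Proof.
apply is_series_unique. replace 1 with (0 + rsum 1 (fun k => beta ^ k * PrCostK k t))
  by (simpl; rewrite PrCostK_target; simpl; ring).
apply (is_series_untail 1). apply (is_series_ext_R (fun _ => 0)); [|apply is_series_0].
intros k. simpl. rewrite PrCostK_target. simpl. ring.
Qed.

Lemma disc_cost_target : disc_cost t = 0.
Proof.
apply is_series_unique. apply (is_series_ext_R (fun _ => 0)); [|apply is_series_0].
intros k. rewrite PrCostK_target. destruct k; simpl; ring.
Qed.

Lemma PrCost_lattice_shift K k j : (j < n)%nat ->
  PrCost n P w j t (INR k * delta - INR K * delta) = if (k <? K)%nat then 0 else PrCostK (k - K) j.
Proof.
intros Hj. destruct (Nat.ltb_spec k K) as [Hk|Hk].
- apply PrCost_neg_cost with delta; auto. apply lt_INR in Hk. nra.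
- unfold PrCostK. rewrite minus_INR by auto. f_equal. ring.
Qed.

Lemma is_series_edge x j (h : nat -> R) (g : R -> R) : (x < n)%nat -> (j < n)%nat ->
  (forall K, is_series (fun i => beta ^ i * h (K + i)%nat * PrCostK i j) (g (INR K * delta))) ->
  is_series (fun k => P x j * (beta ^ k * h k * PrCost n P w j t (INR k * delta - w x j)))
    (Pev P w alpha x j * g (w x j)).
Proof.
intros Hx Hj Hg. unfold Pev. destruct (Req_dec (P x j) 0) as [E|E].
{ rewrite E, !Rmult_0_l. apply (is_series_ext_R (fun _ => 0)); [|apply is_series_0].
  intros; ring. }
destruct (Hw x j Hx Hj (P_neq0_pos n P HPnn x j Hx Hj E)) as [K [_ HK]].
rewrite HK, Rpower_lattice, Rmult_assoc. apply (is_series_scal (V := R_NormedModule)).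
replace (beta ^ K * g (INR K * delta)) with
  (beta ^ K * g (INR K * delta) +
   rsum K (fun k => beta ^ k * h k * PrCost n P w j t (INR k * delta - INR K * delta))).
- apply is_series_untail.
  apply (is_series_ext_R (fun i => beta ^ K * (beta ^ i * h (K + i)%nat * PrCostK i j))).
  + intros i. rewrite PrCost_lattice_shift, pow_add by auto.
    destruct (Nat.ltb_spec (K + i) K); [lia|]. replace (K + i - K)%nat with i by lia. ring.
  + apply (is_series_scal (V := R_NormedModule)). auto.
- rewrite (rsum_ext K _ (fun _ => 0)), rsum0; [ring|].
  intros k Hk. rewrite PrCost_lattice_shift by auto. apply Nat.ltb_lt in Hk. rewrite Hk. ring.
Qed.

Lemma is_series_disc_step x (h : nat -> R) (g : nat -> R -> R) : (x < n)%nat -> x <> t ->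
  (forall j K, (j < n)%nat ->
     is_series (fun i => beta ^ i * h (K + i)%nat * PrCostK i j) (g j (INR K * delta))) ->
  is_series (fun k => beta ^ k * h k * PrCostK k x)
    (rsum n (fun j => Pev P w alpha x j * g j (w x j))).
Proof.
intros Hx Hxt Hg.
apply (is_series_ext_R (fun k => rsum n (fun j =>
  P x j * (beta ^ k * h k * PrCost n P w j t (INR k * delta - w x j))))).
- intros k. unfold PrCostK. rewrite (PrCost_step n P w t HPnn HProw) by auto.
  rewrite <- rsumZ. apply rsum_ext; intros; ring.
- apply is_series_rsum. intros j Hj. apply is_series_edge; auto.
Qed.

Lemma disc_hit_step x : (x < n)%nat -> x <> t ->
  disc_hit x = rsum n (fun j => Pev P w alpha x j * disc_hit j).
Proof.
intros Hx Hxt. apply is_series_unique.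
apply (is_series_ext_R (fun k => beta ^ k * 1 * PrCostK k x)); [intros; ring|].
apply (is_series_disc_step x (fun _ => 1) (fun j _ => disc_hit j)); auto.
intros j K Hj. apply (is_series_ext_R (fun i => beta ^ i * PrCostK i j)); [intros; ring|].
apply disc_hit_series; auto.
Qed.

Lemma disc_cost_step x : (x < n)%nat -> x <> t ->
  disc_cost x = rsum n (fun j => Pev P w alpha x j * (w x j * disc_hit j + disc_cost j)).
Proof.
intros Hx Hxt. apply is_series_unique.
apply (is_series_ext_R (fun k => beta ^ k * (INR k * delta) * PrCostK k x)); [intros; ring|].
apply (is_series_disc_step x (fun k => INR k * delta) (fun j c => c * disc_hit j + disc_cost j));
  auto.
intros j K Hj.
apply (is_series_ext_R (fun i => INR K * delta * (beta ^ i * PrCostK i j) +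
                               INR i * delta * beta ^ i * PrCostK i j)).
- intros i. rewrite plus_INR. ring.
- apply (is_series_plus (V := R_NormedModule));
    [apply (is_series_scal (V := R_NormedModule)), disc_hit_series|apply disc_cost_series]; auto.
Qed.

Section MinimumCost.

Variables (x k0 : nat).
Hypothesis Hx : (x < n)%nat.
Hypothesis Hmin : is_min_cost n P w x t (INR k0 * delta).

Lemma PrCostK_below_min k : (k < k0)%nat -> PrCostK k x = 0.
Proof.
intros Hk. apply (PrCost_below_min_cost n P w t HPnn x (INR k0 * delta)); auto.
apply lt_INR in Hk. nra.
Qed.

Lemma disc_hit_from_min : is_series (disc_weight k0 x) (disc_hit x).
Proof.
apply (is_series_drop_zeros k0 (fun k => beta ^ k * PrCostK k x)); [|apply disc_hit_series; auto].
intros k Hk. rewrite PrCostK_below_min; auto. ring.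
Qed.

Lemma disc_cost_from_min :
  is_series (fun m => INR m * disc_weight k0 x m)
    ((disc_cost x - INR k0 * delta * disc_hit x) / delta).
Proof.
assert (Hc : is_series (fun m => INR (k0 + m) * delta * beta ^ (k0 + m) * PrCostK (k0 + m) x)
  (disc_cost x)).
{ apply (is_series_drop_zeros k0 (fun k => INR k * delta * beta ^ k * PrCostK k x));
    [|apply disc_cost_series; auto].
  intros k Hk. rewrite PrCostK_below_min; auto. ring. }
apply (is_series_ext_R (fun m => / delta * (INR (k0 + m) * delta * beta ^ (k0 + m) * PrCostK (k0 + m) x)
  + - INR k0 * disc_weight k0 x m)).
- intros m. unfold disc_weight. rewrite plus_INR. field. lra.
- replace ((disc_cost x - INR k0 * delta * disc_hit x) / delta)
    with (/ delta * disc_cost x + - INR k0 * disc_hit x) by (field; lra).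
  apply (is_series_plus (V := R_NormedModule)); apply (is_series_scal (V := R_NormedModule));
    [exact Hc|exact disc_hit_from_min].
Qed.

Lemma disc_hit_from_min_pos : 0 < disc_hit x.
Proof.
pose proof beta_bounds.
pose proof (PrCost_min_cost_pos n P w delta t HPnn HProw Hdelta Hw x _ Hx Hmin) as Hpos.
apply Rlt_le_trans with (disc_weight k0 x 0).
- unfold disc_weight. rewrite Nat.add_0_r. apply Rmult_lt_0_compat; [apply pow_lt; lra|exact Hpos].
- apply (is_series_ge_term (disc_weight k0 x)); [|exact disc_hit_from_min].
  intros m. apply disc_weight_ge0; auto.
Qed.

End MinimumCost.

End DiscountedHitting.

Section FundamentalMatrix.

Variables (n : nat) (P w : nat -> nat -> R) (delta : R) (t : nat) (alpha : R).
Hypothesis HPnn : forall i j, (i < n)%nat -> (j < n)%nat -> 0 <= P i j.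
Hypothesis HProw : forall i, (i < n)%nat -> rsum n (P i) = 1.
Hypothesis Hdelta : 0 < delta.
Hypothesis Hw : forall i j, (i < n)%nat -> (j < n)%nat -> 0 < P i j ->
  exists k : nat, (1 <= k)%nat /\ w i j = INR k * delta.
Hypothesis Ht : (t < n)%nat.
Hypothesis Halpha : 0 < alpha < 1.
Variable F : nat -> nat -> R.
Hypothesis HF : is_fundamental n t (Pev P w alpha) F.

Notation Pa := (Pev P w alpha).
Notation beta := (beta delta alpha).
Notation phi := (disc_hit n P w delta t alpha).
Notation psi := (disc_cost n P w delta t alpha).

Lemma Pev_ge0 i j : (i < n)%nat -> (j < n)%nat -> 0 <= Pa i j.
Proof. intros. unfold Pev. apply Rmult_le_pos; auto. unfold Rpower; left; apply exp_pos. Qed.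

Lemma Pev_row_le_beta i : (i < n)%nat -> rsum n (Pa i) <= beta.
Proof.
intros Hi. pose proof (beta_bounds delta alpha Hdelta Halpha).
apply Rle_trans with (rsum n (fun j => P i j * beta)).
- apply rsum_le; intros j Hj. unfold Pev. destruct (Req_dec (P i j) 0) as [E|E]; [rewrite E; lra|].
  destruct (Hw i j Hi Hj (P_neq0_pos n P HPnn i j Hi Hj E)) as [K [HK1 HK]].
  rewrite HK, Rpower_lattice by auto. apply Rmult_le_compat_l; auto.
  destruct K as [|K]; [lia|]. simpl.
  assert (beta ^ K <= 1) by (rewrite <- (pow1 K); apply pow_incr; lra).
  assert (0 <= beta ^ K) by (apply pow_le; lra). nra.
- rewrite rsumZr, HProw by auto; lra.
Qed.

(* Rows of [Pa] sum to at most [beta < 1], so [v |-> Pa v] contracts the sup norm on T. *)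
Lemma Pev_fixed_point_zero v :
  (forall x, (x < n)%nat -> x <> t -> v x = rsumT n t (fun j => Pa x j * v j)) ->
  forall x, (x < n)%nat -> x <> t -> v x = 0.
Proof.
intros Hv. pose proof (beta_bounds delta alpha Hdelta Halpha).
set (M := rmax n (fun j => if Nat.eqb j t then 0 else Rabs (v j))).
assert (HM0 : 0 <= M) by apply rmax_ge0.
assert (HvM : forall j, (j < n)%nat -> j <> t -> Rabs (v j) <= M).
{ intros j Hj Hjt. pose proof (rmax_ge n (fun j => if Nat.eqb j t then 0 else Rabs (v j)) j Hj) as Hmax.
  cbv beta in Hmax. rewrite (proj2 (Nat.eqb_neq j t) Hjt) in Hmax. exact Hmax. }
assert (Hb : forall x, (x < n)%nat -> x <> t -> Rabs (v x) <= beta * M).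
{ intros x Hx Hxt. rewrite Hv by auto. unfold rsumT. eapply Rle_trans; [apply rsum_abs|].
  apply Rle_trans with (rsum n (fun j => Pa x j * M)).
  - apply rsum_le; intros j Hj. pose proof (Pev_ge0 x j Hx Hj).
    destruct (Nat.eqb_spec j t); [rewrite Rabs_R0; nra|].
    rewrite Rabs_mult, (Rabs_pos_eq (Pa x j)) by auto. apply Rmult_le_compat_l; auto.
  - rewrite rsumZr. pose proof (Pev_row_le_beta x Hx). nra. }
assert (M <= beta * M).
{ apply rmax_lub; [|nra]. intros j Hj. destruct (Nat.eqb_spec j t); [nra|auto]. }
intros x Hx Hxt. specialize (Hb x Hx Hxt). apply Rabs_eq_0.
pose proof (Rabs_pos (v x)). nra.
Qed.

Lemma fundamental_solve b u :
  (forall x, (x < n)%nat -> x <> t -> u x - rsumT n t (fun i => Pa x i * u i) = b x) ->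
  forall x, (x < n)%nat -> x <> t -> u x = rsumT n t (fun m => F x m * b m).
Proof.
intros Hu. set (y := fun x => rsumT n t (fun m => F x m * b m)).
assert (Hy : forall x, (x < n)%nat -> x <> t -> y x - rsumT n t (fun i => Pa x i * y i) = b x).
{ intros x Hx Hxt. rewrite <- (rsumT_kronecker n t x y), <- rsumTB by auto.
  transitivity (rsumT n t (fun i => rsumT n t (fun m =>
    ((if Nat.eqb x i then 1 else 0) - Pa x i) * F i m * b m))).
  - apply rsumT_ext; intros i Hi Hit. unfold y. rewrite <- Rmult_minus_distr_r.
    unfold rsumT. rewrite <- rsumZ. apply rsum_ext; intros. destruct (Nat.eqb j t); ring.
  - rewrite rsumT_exchange, <- (rsumT_kronecker n t x b) by auto.
    apply rsumT_ext; intros m Hm Hmt. rewrite rsumTZr. f_equal. apply HF; auto. }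
assert (Hdiff : forall x, (x < n)%nat -> x <> t ->
  u x - y x = rsumT n t (fun j => Pa x j * (u j - y j))).
{ intros x Hx Hxt.
  replace (rsumT n t (fun j => Pa x j * (u j - y j))) with
    (rsumT n t (fun j => Pa x j * u j) - rsumT n t (fun j => Pa x j * y j))
    by (rewrite <- rsumTB; apply rsumT_ext; intros; ring).
  specialize (Hu x Hx Hxt). specialize (Hy x Hx Hxt). lra. }
intros x Hx Hxt. pose proof (Pev_fixed_point_zero _ Hdiff x Hx Hxt). unfold y in *. lra.
Qed.

Lemma Qabs_disc_hit x : (x < n)%nat -> Qabs n t Pa F x = phi x.
Proof.
intros Hx. unfold Qabs. destruct (Nat.eqb_spec x t) as [->|Hxt].
- rewrite disc_hit_target; auto.
- symmetry. apply (fundamental_solve (fun m => Pa m t) phi); auto.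
  intros y Hy Hyt. rewrite (disc_hit_step n P w delta t alpha) at 1 by auto.
  rewrite (rsum_splitT n t) by auto. rewrite disc_hit_target; auto. ring.
Qed.

Definition step_cost m := rsum n (fun i => Pa m i * w m i * phi i).

Lemma disc_cost_fundamental s : (s < n)%nat -> s <> t ->
  psi s = rsumT n t (fun m => F s m * step_cost m).
Proof.
intros Hs Hst. apply (fundamental_solve step_cost psi); auto.
intros y Hy Hyt. rewrite (disc_cost_step n P w delta t alpha) at 1 by auto.
rewrite (rsum_ext n _ (fun j => Pa y j * w y j * phi j + Pa y j * psi j)) by (intros; ring).
rewrite rsumD, (rsum_splitT n t (fun j => Pa y j * psi j)), disc_cost_target by auto.
unfold step_cost. ring.
Qed.

(* When [phi m = 0] both sides vanish, even though [rcost m] divides by zero. *)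
Lemma disc_hit_rcost m : (m < n)%nat -> m <> t -> phi m * rcost n t Pa w F m = step_cost m.
Proof.
intros Hm Hmt. unfold rcost, step_cost.
rewrite (rsum_ext n _ (fun i => (Pa m i * w m i * phi i) * / phi m))
  by (intros i Hi; rewrite !Qabs_disc_hit by auto; unfold Rdiv; ring).
rewrite rsumZr. destruct (Req_dec (phi m) 0) as [E|E]; [|field; auto].
rewrite E, Rmult_0_l. symmetry.
assert (H0 : rsum n (fun j => Pa m j * phi j) = 0)
  by (rewrite <- (disc_hit_step n P w delta t alpha) by auto; auto).
rewrite <- (rsum0 n). apply rsum_ext; intros i Hi.
assert (Hterm : 0 <= Pa m i * phi i).
{ apply Rmult_le_pos; [apply Pev_ge0|apply (disc_hit_ge0 n P w delta t alpha)]; auto. }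
assert (Pa m i * phi i <= 0).
{ rewrite <- H0. apply (rsum_ge_term n (fun j => Pa m j * phi j)); auto.
  intros j Hj. apply Rmult_le_pos; [apply Pev_ge0|apply (disc_hit_ge0 n P w delta t alpha)]; auto. }
replace (Pa m i * w m i * phi i) with (w m i * (Pa m i * phi i)) by ring.
replace (Pa m i * phi i) with 0 by lra. ring.
Qed.

Lemma Uavoid_disc s : (s < n)%nat -> s <> t -> phi s <> 0 ->
  Uavoid n t Pa w F s = psi s / phi s.
Proof.
intros Hs Hst Hp. unfold Uavoid. rewrite disc_cost_fundamental by auto.
unfold Rdiv. rewrite <- rsumTZr. apply rsumT_ext; intros m Hm Hmt.
rewrite !Qabs_disc_hit, <- disc_hit_rcost by auto. field. auto.
Qed.

Lemma Uavoid_sub_min_cost s k0 : (s < n)%nat -> s <> t ->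
  is_min_cost n P w s t (INR k0 * delta) ->
  Uavoid n t Pa w F s - INR k0 * delta = delta / phi s * ((psi s - INR k0 * delta * phi s) / delta).
Proof.
intros Hs Hst Hmin.
pose proof (disc_hit_from_min_pos n P w delta t alpha HPnn HProw Hdelta Hw Halpha s k0 Hs Hmin).
rewrite Uavoid_disc by (auto; lra). field. lra.
Qed.

End FundamentalMatrix.

Theorem mainTheorem3
  (n : nat) (P w : nat -> nat -> R) (delta : R) (s t : nat) (L : R)
  (HPnn : forall i j, (i < n)%nat -> (j < n)%nat -> 0 <= P i j)
  (HProw : forall i, (i < n)%nat -> rsum n (P i) = 1)
  (Hdelta : 0 < delta)
  (Hw : forall i j, (i < n)%nat -> (j < n)%nat -> 0 < P i j ->
          exists k : nat, (1 <= k)%nat /\ w i j = INR k * delta)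
  (Hs : (s < n)%nat) (Ht : (t < n)%nat) (Hst : s <> t)
  (Hpath : exists p, walk_ok n P s p t)
  (HL : is_min_cost n P w s t L) :
  forall alpha : R, 0 < alpha < 1 ->
  forall F : nat -> nat -> R, is_fundamental n t (Pev P w alpha) F ->
  let U := Uavoid n t (Pev P w alpha) w F s in
  let l := fun i : nat => L + INR i * delta in
  let Pr := PrCost n P w s t in
  exists (D : R) (N : nat -> R),
    0 < D /\
    infinite_sum (fun i => Rpower alpha (l i) * Pr (l i)) D /\
    (forall j, infinite_sum (fun i => Rpower alpha (l i) * Pr (l (i + j)%nat)) (N j)) /\
    (forall j, (1 <= j)%nat -> 0 <= N j / D) /\
    infinite_sum (fun k => delta * Rpower alpha (INR (S k) * delta) * (N (S k) / D)) (U - L) /\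
    L <= U.
Proof.
intros alpha Halpha F HF U l Pr.
destruct (proj1 HL) as [p0 [Hp0 Hcost]].
destruct (walk_cost_multiple n P w delta Hw s p0 t Hs Hp0) as [k0 Hk0].
assert (HLk : L = INR k0 * delta) by congruence. rewrite HLk in HL.
pose proof (beta_bounds delta alpha Hdelta Halpha) as Hb.
pose proof (disc_hit_from_min_pos n P w delta t alpha HPnn HProw Hdelta Hw Halpha s k0 Hs HL) as Hphi.
pose proof (disc_hit_from_min n P w delta t alpha HPnn HProw Hdelta Halpha s k0 Hs HL) as HD.
pose proof (disc_cost_from_min n P w delta t alpha HPnn HProw Hdelta Halpha s k0 Hs HL) as HA.
pose proof (fun m => disc_weight_ge0 n P w delta t alpha HPnn HProw Hdelta Halpha k0 s m Hs) as Ha.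
set (b := beta delta alpha) in *. set (phi := disc_hit n P w delta t alpha s) in *.
set (a := disc_weight n P w delta t alpha k0 s) in *.
set (A := (disc_cost n P w delta t alpha s - INR k0 * delta * phi) / delta) in *.
assert (HU : U - L = delta / phi * A) by (rewrite HLk; unfold U;
  apply (Uavoid_sub_min_cost n P w delta t alpha HPnn HProw Hdelta Hw Ht Halpha F HF); auto).
assert (Hterm : forall i j, Rpower alpha (l i) * Pr (l (i + j)%nat) = / b ^ j * a (j + i)%nat)
  by (intros; unfold l, Pr; rewrite HLk; apply disc_weight_term; lra).
destruct (tail_ratio_series a b delta phi A ltac:(lra) Hphi Ha HD HA) as [HN [HNnn Heps]].
exists phi, (fun j => / b ^ j * (phi - rsum j a)).
repeat split; auto.
- apply is_series_Reals. apply (is_series_ext_R (fun i => / b ^ 0 * a (0 + i)%nat)).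
  + intros i. rewrite <- Hterm, Nat.add_0_r. reflexivity.
  + replace phi with (/ b ^ 0 * (phi - rsum 0 a)) by (simpl; field). exact (HN 0%nat).
- intros j. apply is_series_Reals. apply (is_series_ext_R _ _ _ (fun i => eq_sym (Hterm i j))), HN.
- apply is_series_Reals. rewrite HU.
  apply (is_series_ext_R (fun k => delta * b ^ S k * (/ b ^ S k * (phi - rsum (S k) a) / phi))).
  + intros k. rewrite Rpower_lattice by auto. reflexivity.
  + exact Heps.
- assert (0 <= A) by exact (is_series_ge0 _ _ (fun m => Rmult_le_pos _ _ (pos_INR m) (Ha m)) HA).
  assert (0 <= delta / phi * A) by (apply Rmult_le_pos; [apply Rlt_le, Rdiv_lt_0_compat|]; lra).
  lra.
Qed.
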